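(* Let $(X,\le)$ be a poset and $E$ an equivalence relation on $X$ with ${\le}\subseteq E$; let $\alpha:X\to X$ be an order automorphism and $\beta:X\to X$ a self-inverse dual order automorphism of $(X,\le)$ with $\alpha,\beta\subseteq E$ and $\beta=\alpha\circ\beta\circ\alpha$, and let $\mathbf A=\mathbf{Dq}(\mathbf E)=\langle\mathsf{Up}(\mathbf E),\cap,\cup,\circ,{\le},0,{\sim},-,'\rangle$ with $0=\alpha\circ({\le}^c)^\smile$ and $R'=\alpha\circ\beta\circ R^c\circ\beta$. Let $n\in\omega$, and for $R\in\mathsf{Up}(\mathbf E)$ let $R^{\triangledown n}={\sim}^{2n}(R')$ and $R^{\vartriangle n}=-^{2n}(R')$. Then there are self-inverse dual order automorphisms $\beta_{\triangledown n}$ and $\beta_{\vartriangle n}$ of $(X,\le)$ such that (i) $\beta_{\triangledown n},\beta_{\vartriangle n}\subseteq E$; (ii) $\beta_{\triangledown n}=\alpha\circ\beta_{\triangledown n}\circ\alpha$ and $\beta_{\vartriangle n}=\alpha\circ\beta_{\vartriangle n}\circ\alpha$; (iii) for all $R\in\mathsf{Up}(\mathbf E)$, $R^{\triangledown n}=\alpha\circ\beta_{\triangledown n}\circ R^c\circ\beta_{\triangledown n}$ and $R^{\vartriangle n}=\alpha\circ\beta_{\vartriangle n}\circ R^c\circ\beta_{\vartriangle n}$.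
   Context: For binary relations: converse $R^\smile=\{(x,y)\mid(y,x)\in R\}$; composition $R\circ S=\{(x,y)\mid\exists z\,((x,z)\in R,(z,y)\in S)\}$. Functions are identified with their graphs. For a poset $(X,\le)$ and an equivalence relation $E\supseteq{\le}$, $E$ is partially ordered by $(u,v)\preceq(x,y)$ iff $x\le u$ and $v\le y$; $\mathbf E=(E,\preceq)$, $\mathsf{Up}(\mathbf E)$ its up-sets. For $R\subseteq E$, $R^c=E\setminus R$. On $\mathsf{Up}(\mathbf E)$: ${\sim}R=(R^\smile\circ 0^c)^c$ and $-R=(0^c\circ R^\smile)^c$; ${\sim}^k,-^k$ are $k$-fold applications. Order automorphism: bijection with $x\le y\iff\alpha(x)\le\alpha(y)$; dual order automorphism: bijection with $x\le y\iff\beta(y)\le\beta(x)$; self-inverse: $\beta\circ\beta=\mathrm{id}_X$. *)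

From Stdlib Require Import PeanoNat.

Section Rel.
Context {X : Type}.

Definition relation := X -> X -> Prop.

Definition conv (R : relation) : relation := fun x y => R y x.
Definition comp (R S : relation) : relation :=
  fun x y => exists z, R x z /\ S z y.
Definition graph (f : X -> X) : relation := fun x y => f x = y.
(* relative complement R^c = E \ R *)
Definition rcompl (E R : relation) : relation := fun x y => E x y /\ ~ R x y.

Definition subrel (R S : relation) : Prop := forall x y, R x y -> S x y.
Definition releq (R S : relation) : Prop := forall x y, R x y <-> S x y.

Definition is_poset (le : relation) : Prop :=
  (forall x, le x x) /\
  (forall x y, le x y -> le y x -> x = y) /\
  (forall x y z, le x y -> le y z -> le x z).

Definition is_equivalence (E : relation) : Prop :=
  (forall x, E x x) /\
  (forall x y, E x y -> E y x) /\
  (forall x y z, E x y -> E y z -> E x z).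

Definition bijective_fun (f : X -> X) : Prop :=
  (forall x y, f x = f y -> x = y) /\ (forall y, exists x, f x = y).

Definition order_automorphism (le : relation) (f : X -> X) : Prop :=
  bijective_fun f /\ (forall x y, le x y <-> le (f x) (f y)).

Definition dual_order_automorphism (le : relation) (f : X -> X) : Prop :=
  bijective_fun f /\ (forall x y, le x y <-> le (f y) (f x)).

Definition self_inverse (f : X -> X) : Prop := forall x, f (f x) = x.

(* R is an up-set of E = (E, ⪯), where (u,v) ⪯ (x,y) iff x <= u and v <= y *)
Definition upset (le E R : relation) : Prop :=
  subrel R E /\
  (forall u v x y, R u v -> E x y -> le x u -> le v y -> R x y).

Definition dq_zero (le E : relation) (alpha : X -> X) : relation :=
  comp (graph alpha) (conv (rcompl E le)).

Definition dq_sim (le E : relation) (alpha : X -> X) (R : relation) : relation :=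
  rcompl E (comp (conv R) (rcompl E (dq_zero le E alpha))).

Definition dq_minus (le E : relation) (alpha : X -> X) (R : relation) : relation :=
  rcompl E (comp (rcompl E (dq_zero le E alpha)) (conv R)).

Definition twisted_neg (E : relation) (alpha beta : X -> X) (R : relation)
  : relation :=
  comp (comp (comp (graph alpha) (graph beta)) (rcompl E R)) (graph beta).

Definition dq_prime (E : relation) (alpha beta : X -> X) (R : relation)
  : relation := twisted_neg E alpha beta R.

Definition tri_down (le E : relation) (alpha beta : X -> X) (n : nat)
  (R : relation) : relation :=
  Nat.iter (2 * n) (dq_sim le E alpha) (dq_prime E alpha beta R).

Definition tri_up (le E : relation) (alpha beta : X -> X) (n : nat)
  (R : relation) : relation :=
  Nat.iter (2 * n) (dq_minus le E alpha) (dq_prime E alpha beta R).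

End Rel.

From Stdlib Require Import Classical PeanoNat.

(* Call [g] a twisting map when, like [beta], it is a self-inverse dual order
   automorphism contained in [E] with [g = alpha o g o alpha], and write
   [S^g := alpha o g o S^c o g], so that [S' = S^beta].  For an up-set [S],
   [~ S^g] is [g o S^smile o g] restricted to [E] (the relation [twisted_conv]),
   and [~] of that is [S^(alpha o g)]; dually two applications of [-] turn
   [S^g] into [S^(g o alpha)].  Twisting maps are closed under both
   [g |-> alpha o g] and [g |-> g o alpha], so one may take
   [beta_down = alpha^n o beta] and [beta_up = beta o alpha^n]. *)

Lemma subrel_graph_iff {X : Type} (E : relation) (f : X -> X) :
  subrel (graph f) E <-> forall x, E x (f x).
Proof.
  unfold subrel, graph; split.
  - intros Hf x; apply Hf; reflexivity.
  - intros Hf x y <-; apply Hf.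
Qed.

Lemma releq_graph_conj {X : Type} (a g : X -> X) :
  releq (graph g) (comp (comp (graph a) (graph g)) (graph a)) <->
  (forall x, g x = a (g (a x))).
Proof.
  unfold releq, comp, graph; split.
  - intros H x.
    destruct (proj1 (H x (g x)) eq_refl) as [z [[w [<- <-]] <-]]; reflexivity.
  - intros H x y; split.
    + intros <-; exists (g (a x)); split; [exists (a x); split|]; auto.
    + intros [z [[w [<- <-]] <-]]; auto.
Qed.

Lemma bijective_fun_comp {X : Type} (f h : X -> X) :
  bijective_fun f -> bijective_fun h -> bijective_fun (fun x => f (h x)).
Proof.
  intros [f_inj f_surj] [h_inj h_surj]; split.
  - intros x y Hxy; apply h_inj, f_inj, Hxy.
  - intros y; destruct (f_surj y) as [z <-]; destruct (h_surj z) as [x <-].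
    exists x; reflexivity.
Qed.

Lemma twisted_neg_iff {X : Type} (E S : relation) (a g : X -> X) x y :
  self_inverse g ->
  twisted_neg E a g S x y <-> E (g (a x)) (g y) /\ ~ S (g (a x)) (g y).
Proof.
  intros g_inv; unfold twisted_neg, comp, graph, rcompl; split.
  - intros [w [[z [[u [<- <-]] HS]] <-]]; rewrite g_inv; exact HS.
  - intros HS; exists (g y); split; [|apply g_inv].
    exists (g (a x)); split; [exists (a x)|]; auto.
Qed.

Section Twisting.

Variables (X : Type) (le E : @relation X) (alpha : X -> X).
Hypothesis le_refl : forall x, le x x.
Hypothesis E_equiv : is_equivalence E.
Hypothesis alpha_auto : order_automorphism le alpha.
Hypothesis alpha_sub_E : subrel (graph alpha) E.

Definition twist_map (g : X -> X) : Prop :=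
  dual_order_automorphism le g /\ self_inverse g /\ subrel (graph g) E /\
  releq (graph g) (comp (comp (graph alpha) (graph g)) (graph alpha)).

Definition alpha_comp (g : X -> X) : X -> X := fun x => alpha (g x).
Definition comp_alpha (g : X -> X) : X -> X := fun x => g (alpha x).

Definition twisted_conv (g : X -> X) (S : relation) : relation :=
  fun x y => E x y /\ S (g y) (g x).

Lemma E_sym x y : E x y -> E y x.
Proof. apply E_equiv. Qed.

Lemma E_trans x y z : E x y -> E y z -> E x z.
Proof. apply E_equiv. Qed.

Lemma alpha_surj y : exists x, alpha x = y.
Proof. apply alpha_auto. Qed.

Lemma alpha_inj x y : alpha x = alpha y -> x = y.
Proof. apply alpha_auto. Qed.

Lemma alpha_E x : E x (alpha x).
Proof. apply subrel_graph_iff, alpha_sub_E. Qed.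

Lemma le_alpha x y : le x y <-> le (alpha x) (alpha y).
Proof. apply alpha_auto. Qed.

Lemma compl_dq_zero_iff x z :
  rcompl E (dq_zero le E alpha) x z <-> E x z /\ le z (alpha x).
Proof.
  unfold rcompl, dq_zero, comp, conv, graph; split.
  - intros [Hxz Hn]; split; [exact Hxz|].
    apply NNPP; intros Hz; apply Hn; exists (alpha x); split; [reflexivity|].
    split; [|exact Hz]; apply E_trans with x; [apply E_sym, Hxz | apply alpha_E].
  - intros [Hxz Hz]; split; [exact Hxz|].
    intros [w [<- [_ Hn]]]; exact (Hn Hz).
Qed.

Section TwistMap.

Variable g : X -> X.
Hypothesis g_twist : twist_map g.

Lemma twist_anti x y : le x y -> le (g y) (g x).
Proof. apply g_twist. Qed.

Lemma twist_inv : self_inverse g.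
Proof. apply g_twist. Qed.

Lemma twist_E x : E x (g x).
Proof. apply subrel_graph_iff, g_twist. Qed.

Lemma twist_conj x : g x = alpha (g (alpha x)).
Proof. apply releq_graph_conj, g_twist. Qed.

Lemma twist_alpha_E x : E x (g (alpha x)).
Proof. apply E_trans with (alpha x); [apply alpha_E | apply twist_E]. Qed.

Lemma twist_map_alpha_comp : twist_map (alpha_comp g).
Proof.
  unfold alpha_comp; split; [|split; [|split]].
  - split; [apply bijective_fun_comp; [apply alpha_auto | apply g_twist]|].
    intros x y; rewrite <- le_alpha; apply g_twist.
  - intros x; rewrite <- twist_conj; apply twist_inv.
  - apply subrel_graph_iff; intros x.
    apply E_trans with (g x); [apply twist_E | apply alpha_E].
  - apply releq_graph_conj; intros x; rewrite <- twist_conj; reflexivity.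
Qed.

Lemma twist_map_comp_alpha : twist_map (comp_alpha g).
Proof.
  unfold comp_alpha; split; [|split; [|split]].
  - split; [apply bijective_fun_comp; [apply g_twist | apply alpha_auto]|].
    intros x y; rewrite le_alpha; apply g_twist.
  - intros x; apply alpha_inj; rewrite <- twist_conj; apply twist_inv.
  - apply subrel_graph_iff, twist_alpha_E.
  - apply releq_graph_conj; intros x; rewrite <- twist_conj; reflexivity.
Qed.

Ltac E_auto := eauto using E_trans, E_sym, alpha_E, twist_E, twist_alpha_E.

Variable S : @relation X.
Hypothesis S_up : upset le E S.

Lemma dq_sim_twisted_neg (R : @relation X) :
  releq R (twisted_neg E alpha g S) ->
  releq (dq_sim le E alpha R) (twisted_conv g S).
Proof.
  unfold releq; intros HR x y; unfold dq_sim, twisted_conv, comp, conv.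
  unfold rcompl at 1.
  setoid_rewrite compl_dq_zero_iff; setoid_rewrite HR.
  setoid_rewrite (fun u v => twisted_neg_iff E S alpha g u v twist_inv).
  split; intros [Hxy H]; split; auto.
  - apply NNPP; intros HnS; destruct (alpha_surj y) as [z <-].
    apply H; exists z; repeat split; auto; E_auto.
  - intros [z [[Hz HnS] [_ Hyz]]]; apply HnS.
    apply (proj2 S_up (g y) (g x)); auto using twist_anti.
Qed.

Lemma dq_sim_twisted_conv (R : @relation X) :
  releq R (twisted_conv g S) ->
  releq (dq_sim le E alpha R) (twisted_neg E alpha (alpha_comp g) S).
Proof.
  unfold releq; intros HR x y; unfold dq_sim, comp, conv; unfold rcompl at 1.
  setoid_rewrite compl_dq_zero_iff; setoid_rewrite HR; unfold twisted_conv.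
  assert (ag_inv : self_inverse (alpha_comp g)) by apply twist_map_alpha_comp.
  rewrite (twisted_neg_iff _ _ _ _ _ _ ag_inv).
  unfold alpha_comp; rewrite <- twist_conj.
  split; [intros [Hxy H] | intros [Hxy HnS]]; split.
  - E_auto.
  - intros HS; destruct (alpha_surj y) as [z <-].
    apply H; exists z; rewrite (twist_conj z); repeat split; auto; E_auto.
  - E_auto.
  - intros [z [[_ HS] [_ Hyz]]]; destruct (alpha_surj y) as [w <-].
    rewrite <- twist_conj in Hxy, HnS; apply HnS.
    apply (proj2 S_up (g x) (g z)); [exact HS | E_auto | apply le_refl |].
    apply twist_anti, le_alpha, Hyz.
Qed.

Lemma dq_minus_twisted_neg (R : @relation X) :
  releq R (twisted_neg E alpha g S) ->
  releq (dq_minus le E alpha R) (twisted_conv (comp_alpha g) S).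
Proof.
  unfold releq; intros HR x y; unfold dq_minus, twisted_conv, comp_alpha, comp, conv.
  unfold rcompl at 1.
  setoid_rewrite compl_dq_zero_iff; setoid_rewrite HR.
  setoid_rewrite (fun u v => twisted_neg_iff E S alpha g u v twist_inv).
  split; intros [Hxy H]; split; auto.
  - apply NNPP; intros HnS; apply H; exists (alpha x); repeat split; auto; E_auto.
  - intros [z [[_ Hz] [Hyz HnS]]]; apply HnS.
    apply (proj2 S_up (g (alpha y)) (g (alpha x))); auto using twist_anti.
Qed.

Lemma dq_minus_twisted_conv (R : @relation X) :
  releq R (twisted_conv g S) ->
  releq (dq_minus le E alpha R) (twisted_neg E alpha g S).
Proof.
  unfold releq; intros HR x y; unfold dq_minus, comp, conv; unfold rcompl at 1.
  setoid_rewrite compl_dq_zero_iff; setoid_rewrite HR; unfold twisted_conv.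
  rewrite (twisted_neg_iff _ _ _ _ _ _ twist_inv).
  split; [intros [Hxy H] | intros [Hxy HnS]]; split.
  - E_auto.
  - intros HS; apply H; exists (alpha x); repeat split; auto; E_auto.
  - E_auto.
  - intros [z [[_ Hz] [_ HS]]]; apply HnS.
    apply (proj2 S_up (g z) (g y)); auto using twist_anti; E_auto.
Qed.

End TwistMap.

Lemma dq_sim2_twisted_neg g S R :
  twist_map g -> upset le E S -> releq R (twisted_neg E alpha g S) ->
  releq (dq_sim le E alpha (dq_sim le E alpha R))
        (twisted_neg E alpha (alpha_comp g) S).
Proof.
  intros g_twist S_up HR.
  apply dq_sim_twisted_conv, dq_sim_twisted_neg; assumption.
Qed.

Lemma dq_minus2_twisted_neg g S R :
  twist_map g -> upset le E S -> releq R (twisted_neg E alpha g S) ->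
  releq (dq_minus le E alpha (dq_minus le E alpha R))
        (twisted_neg E alpha (comp_alpha g) S).
Proof.
  intros g_twist S_up HR.
  apply dq_minus_twisted_conv, dq_minus_twisted_neg; auto using twist_map_comp_alpha.
Qed.

Lemma twist_map_iter_alpha_comp n g :
  twist_map g -> twist_map (Nat.iter n alpha_comp g).
Proof.
  intros g_twist; induction n as [|n IH]; [exact g_twist|].
  apply twist_map_alpha_comp, IH.
Qed.

Lemma twist_map_iter_comp_alpha n g :
  twist_map g -> twist_map (Nat.iter n comp_alpha g).
Proof.
  intros g_twist; induction n as [|n IH]; [exact g_twist|].
  apply twist_map_comp_alpha, IH.
Qed.

Lemma tri_down_twisted_neg beta n S :
  twist_map beta -> upset le E S ->
  releq (tri_down le E alpha beta n S)
        (twisted_neg E alpha (Nat.iter n alpha_comp beta) S).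
Proof.
  intros beta_twist S_up; induction n as [|n IH]; [intros x y; reflexivity|].
  unfold tri_down; rewrite Nat.mul_succ_r, Nat.add_comm.
  apply dq_sim2_twisted_neg; [apply twist_map_iter_alpha_comp | |]; assumption.
Qed.

Lemma tri_up_twisted_neg beta n S :
  twist_map beta -> upset le E S ->
  releq (tri_up le E alpha beta n S)
        (twisted_neg E alpha (Nat.iter n comp_alpha beta) S).
Proof.
  intros beta_twist S_up; induction n as [|n IH]; [intros x y; reflexivity|].
  unfold tri_up; rewrite Nat.mul_succ_r, Nat.add_comm.
  apply dq_minus2_twisted_neg; [apply twist_map_iter_comp_alpha | |]; assumption.
Qed.

End Twisting.

Theorem proposition3p20 (X : Type) (le E : X -> X -> Prop)
  (alpha beta : X -> X) (n : nat)
  (Hle : is_poset le) (HE : is_equivalence E) (HleE : subrel le E)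
  (Halpha : order_automorphism le alpha)
  (Hbeta : dual_order_automorphism le beta) (Hbeta_inv : self_inverse beta)
  (HalphaE : subrel (graph alpha) E) (HbetaE : subrel (graph beta) E)
  (Hbab : releq (graph beta)
                (comp (comp (graph alpha) (graph beta)) (graph alpha))) :
  exists bd bu : X -> X,
    dual_order_automorphism le bd /\ self_inverse bd /\
    dual_order_automorphism le bu /\ self_inverse bu /\
    (* (i) *)
    subrel (graph bd) E /\ subrel (graph bu) E /\
    (* (ii) *)
    releq (graph bd) (comp (comp (graph alpha) (graph bd)) (graph alpha)) /\
    releq (graph bu) (comp (comp (graph alpha) (graph bu)) (graph alpha)) /\
    (* (iii) *)
    (forall R : X -> X -> Prop, upset le E R ->
       releq (tri_down le E alpha beta n R) (twisted_neg E alpha bd R) /\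
       releq (tri_up le E alpha beta n R) (twisted_neg E alpha bu R)).
Proof.
  destruct Hle as [le_refl _].
  assert (beta_twist : twist_map X le E alpha beta)
    by exact (conj Hbeta (conj Hbeta_inv (conj HbetaE Hbab))).
  pose (bd := Nat.iter n (alpha_comp X alpha) beta).
  pose (bu := Nat.iter n (comp_alpha X alpha) beta).
  assert (bd_twist : twist_map X le E alpha bd)
    by (apply twist_map_iter_alpha_comp; assumption).
  assert (bu_twist : twist_map X le E alpha bu)
    by (apply twist_map_iter_comp_alpha; assumption).
  exists bd, bu.
  destruct bd_twist as (bd_dual & bd_inv & bd_E & bd_conj).
  destruct bu_twist as (bu_dual & bu_inv & bu_E & bu_conj).
  do 8 (split; [assumption|]).
  intros R R_up; split;
    [apply tri_down_twisted_neg | apply tri_up_twisted_neg]; assumption.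
Qed.
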